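(* Let $(V,f)$ be a cubic space with $\mathrm{rrk}(f)=\infty$. Given a good table $T$ with $r$ rows, there is a good table $T'\supset T$ obtained by adding a new $(r+1)$-st row (consisting of a new element $v_{r+1}$ and no $w$'s).
   Context: $k$ is algebraically closed of characteristic different from $2,3$. For $V$ with basis and dual coordinates $x_i$, $P_n(V)$ is the space of formal, possibly infinite, $k$-linear combinations of degree-$n$ monomials in the $x_i$. The strength of a homogeneous $h\in P_n(V)$, $n\ge1$, is the least $s$ with $h=\sum_{i=1}^s a_ib_i$, $a_i,b_i$ homogeneous of positive degree less than $n$ ($\infty$ if none). $P_2^\circ(V)$ is the subspace of finite-strength quadratic forms and $\overline{P}_2(V)=P_2(V)/P_2^\circ(V)$. For $v\in V$, $f_v=\partial_vf\in P_2(V)$ is the directional derivative (in coordinates $\partial_{v_i}f=\partial f/\partial x_i$), and $\overline{q}(v)$ is the image of $f_v$ in $\overline{P}_2(V)$; $\overline{Q}=\overline{q}(V)$, and $\mathrm{rrk}(f)=\dim\overline{Q}$. $\langle-,-,-\rangle_f$ is the symmetric trilinear form on $V$ with $\langle v,v,v\rangle_f=f(v)$; then $f_v(w)=3\langle v,w,w\rangle_f$. A good table is a finite table with rows $v_i\mid w_{i,1},\dots,w_{i,n_i}$ ($1\le i\le r$, $n_i\ge0$), entries in $V$, such that: (a) the entries are linearly independent; (b) $\langle v_i,w_{i,j},w_{i,j}\rangle_f=1$ for all $i,j$, and whenever $x,y,z$ are entries with $\langle x,y,z\rangle_f\ne0$, then up to permutation $x=v_i$ and $y=z=w_{i,j}$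 for some $i,j$; (c) the elements $\overline{q}(v_i)$ ($1\le i\le r$) together with those $\overline{q}(w_{i,j})$ that are nonzero are pairwise distinct and linearly independent in $\overline{Q}$. *)

From HB Require Import structures.
From mathcomp Require Import all_boot all_order all_algebra.
Set Implicit Arguments. Unset Strict Implicit. Unset Printing Implicit Defensive.
Import GRing.Theory.
Local Open Scope ring_scope.

Section CubicDefs.
Variables (I : eqType) (k : fieldType).

(* V : the vector space with basis (e_i)_{i : I}, i.e. finitely supported
   coordinate functions I -> k.  vcoef v i = x_i(v). *)
Record vect := Vect {
  vcoef : I -> k;
  vsupp : seq I;
  vsuppP : forall i, i \notin vsupp -> vcoef i = 0 }.

Definition vect0 : vect := @Vect (fun _ => 0) [::] (fun _ _ => erefl).

(* Formal, possibly infinite, linear combinations of monomials in the x_i.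
   A monomial x_{i1}...x_{in} is represented by any word [:: i1; ...; in];
   the coefficient function is required to be invariant under permutation
   of the word, so it is a function on monomials (= finite multisets). *)
Definition fser := seq I -> k.

Definition homog (n : nat) (h : fser) : Prop :=
  (forall s, size s != n -> h s = 0) /\
  (forall s t, perm_eq s t -> h s = h t).

Definition lmul (a b : fser) : fser := fun s =>
  match s with
  | [:: i; j] => if i == j then a [:: i] * b [:: i]
                 else a [:: i] * b [:: j] + a [:: j] * b [:: i]
  | _ => 0
  end.

Definition pd (i : I) (h : fser) : fser := fun s =>
  (count_mem i s).+1%:R * h (i :: s).

Definition fder (v : vect) (h : fser) : fser := fun s =>
  \sum_(i <- undup (vsupp v)) vcoef v i * pd i h s.

Definition fv (f : fser) (v : vect) : fser := fder v f.

(* symmetric trilinear form <u,v,w>_f of a cubic f (so <v,v,v>_f = f(v)):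
   one sixth of the (constant) third derivative d_u d_v d_w f. *)
Definition tri (f : fser) (u v w : vect) : k :=
  6%:R^-1 * fder u (fder v (fder w f)) [::].

Definition fin_strength (h : fser) : Prop :=
  exists (s : nat) (a b : 'I_s -> fser),
    (forall t, homog 1 (a t) /\ homog 1 (b t)) /\
    (forall w, h w = \sum_(t < s) lmul (a t) (b t) w).

(* rrk(f) = infinity : the image Qbar of V in P_2 / P_2^o is
   infinite-dimensional, i.e. contains linearly independent families
   of every finite size. *)
Definition rrk_infinite (f : fser) : Prop :=
  forall n : nat, exists vs : 'I_n -> vect,
    forall c : 'I_n -> k,
      fin_strength (fun w => \sum_(j < n) c j * fv f (vs j) w) ->
      forall j, c j = 0.

(* Tables: a table is a list of rows (v_i, [:: w_{i,1}; ...; w_{i,n_i}]). *)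
Definition table := seq (vect * seq vect).

(* positions of entries: (i, None) is v_i, (i, Some j) is w_{i,j} *)
Definition positions (T : table) : seq (nat * option nat) :=
  flatten [seq (i, None) :: [seq (i, Some j) | j <- iota 0 (size (nth (vect0, [::]) T i).2)]
          | i <- iota 0 (size T)].

Definition entry (T : table) (p : nat * option nat) : vect :=
  let row := nth (vect0, [::]) T p.1 in
  match p.2 with
  | None => row.1
  | Some j => nth vect0 row.2 j
  end.

Definition good_a (T : table) : Prop :=
  forall c : nat * option nat -> k,
    (forall l : I, \sum_(p <- positions T) c p * vcoef (entry T p) l = 0) ->
    forall p, p \in positions T -> c p = 0.

Definition good_b (f : fser) (T : table) : Prop :=
  (forall i j, (i, Some j) \in positions T ->
     tri f (entry T (i, None)) (entry T (i, Some j)) (entry T (i, Some j)) = 1)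
  /\
  (forall p1 p2 p3, p1 \in positions T -> p2 \in positions T -> p3 \in positions T ->
     tri f (entry T p1) (entry T p2) (entry T p3) != 0 ->
     exists i j, (i, Some j) \in positions T /\
       perm_eq [:: p1; p2; p3] [:: (i, None); (i, Some j); (i, Some j)]).

(* the entries whose image qbar(.) is considered in (c):
   all v_i, and those w_{i,j} with qbar(w_{i,j}) <> 0 *)
Definition c_selected (f : fser) (T : table) (p : nat * option nat) : Prop :=
  p.2 = None \/ ~ fin_strength (fv f (entry T p)).

Definition good_c (f : fser) (T : table) : Prop :=
  (forall p p', p \in positions T -> p' \in positions T ->
     c_selected f T p -> c_selected f T p' -> p != p' ->
     ~ fin_strength (fun w => fv f (entry T p) w - fv f (entry T p') w))
  /\
  (forall c : nat * option nat -> k,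
     (forall p, ~ c_selected f T p -> c p = 0) ->
     fin_strength (fun w => \sum_(p <- positions T) c p * fv f (entry T p) w) ->
     forall p, p \in positions T -> c p = 0).

Definition good_table (f : fser) (T : table) : Prop :=
  good_a T /\ good_b f T /\ good_c f T.

End CubicDefs.

From HB Require Import structures.
From mathcomp Require Import all_boot all_order all_algebra.
From Stdlib Require Import Classical.
From mathcomp Require Import ring zify.
Set Implicit Arguments. Unset Strict Implicit. Unset Printing Implicit Defensive.
Import GRing.Theory.
Local Open Scope ring_scope.

(* It suffices to find a vector v such that
   (i)  f_v is linearly independent of P_2^o and of the quadrics f_x, x an
        entry of T (then (a) and (c) persist), and
   (ii) <x, y, v> = 0 and <x, v, v> = 0 for all entries x, y, and
        <v, v, v> = f(v) = 0 (then (b) persists).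
   Since Qbar is infinite-dimensional, there are families of any size whose
   quadrics are independent modulo the finite-codimensional subspace S of
   (i).  Each linear condition <x, y, -> = 0 of (ii) costs one dimension of
   such a family; each quadratic condition <x, -, -> = 0 is met by choosing
   an isotropic vector z of a binary quadratic form in the span, passing to
   S + k f_z, and imposing the linear conditions <-, z, -> = 0 on the rest.
   Finally a zero of a binary cubic form in a 2-dimensional family gives v. *)

Section Derivatives.
Variables (k : fieldType) (I : eqType).
Local Notation vect := (vect I k).
Local Notation fser := (fser I k).

Lemma fder_over (v : vect) (h : fser) s (L : seq I) :
  uniq L -> (forall i, vcoef v i != 0 -> i \in L) ->
  fder v h s = \sum_(i <- L) vcoef v i * pd i h s.
Proof.
move=> uL hL; rewrite /fder.
set F := fun i => vcoef v i * pd i h s.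
set S0 := undup (vsupp v).
have -> : \sum_(i <- L) vcoef v i * pd i h s = \sum_(i <- L | i \in S0) F i.
  rewrite [RHS]big_mkcond /=; apply: eq_bigr => i _.
  case: ifP => // /negbT; rewrite mem_undup => /vsuppP Hi.
  by rewrite /F Hi mul0r.
have -> : \sum_(i <- S0) vcoef v i * pd i h s = \sum_(i <- S0 | i \in L) F i.
  rewrite [RHS]big_mkcond /=; apply: eq_bigr => i _.
  case: ifP => // /negbT Hi.
  suff -> : vcoef v i = 0 by rewrite /F mul0r.
  by apply/eqP; apply/negPn; apply: contra Hi; apply: hL.
rewrite -[LHS]big_filter -[RHS]big_filter; apply: perm_big; apply: uniq_perm.
- by apply: filter_uniq; apply: undup_uniq.
- exact: filter_uniq.
- by move=> i; rewrite !mem_filter andbC.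
Qed.

Lemma fder_linear (X : eqType) (r : seq X) (a : X -> k) (u : X -> vect)
   (v : vect) (h : fser) s :
  (forall l, vcoef v l = \sum_(x <- r) a x * vcoef (u x) l) ->
  fder v h s = \sum_(x <- r) a x * fder (u x) h s.
Proof.
move=> Hv.
set L := undup (vsupp v ++ flatten [seq vsupp (u x) | x <- r]).
have uL : uniq L by apply: undup_uniq.
rewrite (@fder_over v h s L uL); last first.
  move=> i Hi; rewrite mem_undup mem_cat; apply/orP; left.
  by apply/negPn; apply: contra Hi => /vsuppP ->.
under eq_bigr => i _ do rewrite Hv mulr_suml.
rewrite exchange_big /= big_seq [RHS]big_seq; apply: eq_bigr => x xr.
rewrite (@fder_over (u x) h s L uL); last first.
  move=> i Hi; rewrite mem_undup mem_cat; apply/orP; right.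
  apply/flatten_mapP; exists x => //.
  by apply/negPn; apply: contra Hi => /vsuppP ->.
by rewrite mulr_sumr; apply: eq_bigr => i _; rewrite mulrA.
Qed.

Lemma fder_ext (v : vect) (h h' : fser) s :
  (forall t, h t = h' t) -> fder v h s = fder v h' s.
Proof. by move=> E; rewrite /fder /pd; apply: eq_bigr => i _; rewrite E. Qed.

Definition psym (h : fser) := forall s t, perm_eq s t -> h s = h t.

Lemma fder_psym v h : psym h -> psym (fder v h).
Proof.
move=> Hh s t st; rewrite /fder /pd; apply: eq_bigr => i _.
by rewrite (permP st) (Hh (i :: s) (i :: t)) // perm_cons.
Qed.

Lemma fder_comm (u v : vect) (h : fser) s : psym h ->
  fder u (fder v h) s = fder v (fder u h) s.
Proof.
move=> Hh; rewrite /fder /pd.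
under eq_bigr => i _ do rewrite mulr_sumr mulr_sumr.
rewrite exchange_big /=; apply: eq_bigr => j _.
rewrite mulr_sumr mulr_sumr; apply: eq_bigr => i _.
rewrite (Hh [:: j, i & s] [:: i, j & s]); last first.
  by apply/permP => p /=; rewrite addnCA.
by rewrite /=; case: (eqVneq i j) => [->|nij] /=; rewrite ?add0n; ring.
Qed.

Lemma tri_sym12 (f : fser) u v w : psym f -> tri f u v w = tri f v u w.
Proof. by move=> Hf; rewrite /tri fder_comm //; apply: fder_psym. Qed.

Lemma tri_sym23 (f : fser) u v w : psym f -> tri f u v w = tri f u w v.
Proof.
move=> Hf; rewrite /tri (@fder_ext u _ (fder w (fder v f))) // => t.
exact: fder_comm.
Qed.

Definition lin_comb n (v : vect) (a : 'I_n -> k) (u : 'I_n -> vect) :=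
  forall l, vcoef v l = \sum_j a j * vcoef (u j) l.

Lemma comb_supp n (a : 'I_n -> k) (u : 'I_n -> vect) i :
  i \notin flatten [seq vsupp (u j) | j <- enum 'I_n] ->
  \sum_j a j * vcoef (u j) i = 0.
Proof.
move=> Hi; apply: big1 => j _.
suff -> : vcoef (u j) i = 0 by rewrite mulr0.
apply: vsuppP; apply: contra Hi => Hj.
by apply/flatten_mapP; exists j => //; rewrite mem_enum.
Qed.

Definition vcomb n (a : 'I_n -> k) (u : 'I_n -> vect) : vect :=
  Vect (@comb_supp n a u).

Lemma vcombP n (a : 'I_n -> k) u : lin_comb (vcomb a u) a u.
Proof. by []. Qed.

Lemma fder_comb n v a (u : 'I_n -> vect) (h : fser) s :
  lin_comb v a u -> fder v h s = \sum_j a j * fder (u j) h s.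
Proof. by move=> Hv; apply: (@fder_linear _ (index_enum 'I_n)). Qed.

Lemma fv_comb (f : fser) n v a (u : 'I_n -> vect) w :
  lin_comb v a u -> fv f v w = \sum_j a j * fv f (u j) w.
Proof. exact: fder_comb. Qed.

Lemma tri_comb1 (f : fser) n v a (u : 'I_n -> vect) x y :
  lin_comb v a u -> tri f v x y = \sum_j a j * tri f (u j) x y.
Proof.
move=> Hv; rewrite /tri (fder_comb _ _ Hv) mulr_sumr; apply: eq_bigr => j _.
by rewrite mulrCA.
Qed.

Lemma tri_comb2 (f : fser) n v a (u : 'I_n -> vect) x y : psym f ->
  lin_comb v a u -> tri f x v y = \sum_j a j * tri f x (u j) y.
Proof.
move=> Hf Hv; rewrite tri_sym12 // (tri_comb1 _ _ _ Hv).
by apply: eq_bigr => j _; rewrite tri_sym12.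
Qed.

Lemma tri_comb3 (f : fser) n v a (u : 'I_n -> vect) x y : psym f ->
  lin_comb v a u -> tri f x y v = \sum_j a j * tri f x y (u j).
Proof.
move=> Hf Hv; rewrite tri_sym23 // (tri_comb2 x y Hf Hv).
by apply: eq_bigr => j _; rewrite tri_sym23.
Qed.

End Derivatives.

Section FiniteStrength.
Variables (k : fieldType) (I : eqType).
Local Notation fser := (fser I k).

Lemma fin_strength0 : fin_strength (fun _ : seq I => 0 : k).
Proof.
exists 0%N, (fun _ _ => 0), (fun _ _ => 0); split; first by case.
by move=> w; rewrite big_ord0.
Qed.

Lemma fin_strength_ext (g g' : fser) :
  fin_strength g -> (forall w, g w = g' w) -> fin_strength g'.
Proof. by move=> [s [a [b [H1 H2]]]] E; exists s, a, b; split => // w; rewrite -E. Qed.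

Lemma homog_scale n (c : k) (a : fser) : homog n a -> homog n (fun w => c * a w).
Proof.
move=> [H1 H2]; split; first by move=> s Hs; rewrite H1 // mulr0.
by move=> s t st; rewrite (H2 s t st).
Qed.

Lemma lmul_scale (c : k) (a b : fser) w : lmul (fun w => c * a w) b w = c * lmul a b w.
Proof.
rewrite /lmul; case: w => [|i [|j [|x y]]]; rewrite ?mulr0 //.
by case: ifP => _; ring.
Qed.

Lemma fin_strength_add (g g' : fser) (mu : k) : fin_strength g -> fin_strength g' ->
  fin_strength (fun w => g w + mu * g' w).
Proof.
move=> [s1 [a1 [b1 [H1 E1]]]] [s2 [a2 [b2 [H2 E2]]]].
exists (s1 + s2)%N.
exists (fun t => match split t with
  | inl t1 => a1 t1 | inr t2 => (fun w => mu * a2 t2 w) end).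
exists (fun t => match split t with inl t1 => b1 t1 | inr t2 => b2 t2 end).
split.
  move=> t; case: (split t) => [t1|t2]; first exact: H1.
  by case: (H2 t2) => Ha Hb; split => //; apply: homog_scale.
move=> w; rewrite big_split_ord /= E1 E2 mulr_sumr.
congr (_ + _); apply: eq_bigr => t _.
  by rewrite (_ : lshift s2 t = unsplit (inl t)) // unsplitK.
by rewrite (_ : rshift s1 t = unsplit (inr t)) // unsplitK lmul_scale.
Qed.

End FiniteStrength.

Section IndependenceModulo.
Variables (k : fieldType) (I : eqType) (f : fser I k).
Local Notation vect := (vect I k).
Local Notation fser := (fser I k).

Definition ext_closed (S : fser -> Prop) :=
  forall g g', (forall w, g w = g' w) -> S g -> S g'.
Definition add_closed (S : fser -> Prop) :=
  forall g g' mu, S g -> S g' -> S (fun w => g w + mu * g' w).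

Definition indep_mod (S : fser -> Prop) n (u : 'I_n -> vect) :=
  forall a : 'I_n -> k, S (fun w => \sum_i a i * fv f (u i) w) -> forall i, a i = 0.

Definition nonzero_mod (S : fser -> Prop) (h : fser) :=
  forall c, S (fun w => c * h w) -> c = 0.

Definition add_line (S : fser -> Prop) (h : fser) (g : fser) :=
  exists lam, S (fun w => g w + lam * h w).

Lemma add_line_ext S h : ext_closed S -> ext_closed (add_line S h).
Proof.
move=> HS g g' E [lam Hl]; exists lam; apply: (HS _ _ _ Hl) => w.
by rewrite E.
Qed.

Lemma add_line_add S h : ext_closed S -> add_closed S -> add_closed (add_line S h).
Proof.
move=> HS HA g g' mu [l1 H1] [l2 H2]; exists (l1 + mu * l2).
by apply: (HS _ _ _ (HA _ _ mu H1 H2)) => w; ring.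
Qed.

Lemma sum_delta n (x : 'I_n) (F : 'I_n -> k) : \sum_j (j == x)%:R * F j = F x.
Proof.
rewrite (bigD1 x) //= eqxx mul1r big1 ?addr0 // => j /negbTE ->.
by rewrite mul0r.
Qed.

Lemma lin_comb_sel n (u : 'I_n -> vect) x : lin_comb (u x) (fun j => (j == x)%:R) u.
Proof. by move=> l; rewrite sum_delta. Qed.

Lemma comb_sum n m (u : 'I_n -> vect) (u' : 'I_m -> vect) M (g : 'I_m -> k) w :
  (forall i, lin_comb (u' i) (M i) u) ->
  \sum_i g i * fv f (u' i) w = \sum_j (\sum_i g i * M i j) * fv f (u j) w.
Proof.
move=> HM; under eq_bigr => i _ do rewrite (fv_comb _ _ (HM i)) mulr_sumr.
rewrite exchange_big /=; apply: eq_bigr => j _; rewrite mulr_suml.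
by apply: eq_bigr => i _; rewrite mulrA.
Qed.

Lemma indep_mod_comb n m (u : 'I_n -> vect) (u' : 'I_m -> vect) M S :
  ext_closed S -> (forall i, lin_comb (u' i) (M i) u) ->
  (forall g : 'I_m -> k, (forall j, \sum_i g i * M i j = 0) -> forall i, g i = 0) ->
  indep_mod S u -> indep_mod S u'.
Proof.
move=> HS HM Hrow Hu g Hg; apply: Hrow => j; move: j; apply: Hu.
by apply: (HS _ _ _ Hg) => w; rewrite (comb_sum _ _ HM).
Qed.

Lemma indep_mod_sel n m (u : 'I_n -> vect) (sig : 'I_m -> 'I_n) S :
  ext_closed S -> injective sig -> indep_mod S u -> indep_mod S (fun i => u (sig i)).
Proof.
move=> HS Hsig; apply: (indep_mod_comb (M := fun i j => (j == sig i)%:R)) => //.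
  by move=> i; apply: lin_comb_sel.
move=> g Hg i; move: (Hg (sig i)); rewrite (eq_bigr (fun j => (j == i)%:R * g j)).
  by rewrite sum_delta.
by move=> j _; rewrite (inj_eq Hsig) eq_sym mulrC.
Qed.

Lemma indep_mod_add_line S h n (u : 'I_n.+1 -> vect) :
  ext_closed S -> add_closed S -> indep_mod S u ->
  exists u' : 'I_n -> vect, indep_mod (add_line S h) u'.
Proof.
move=> HS HA Hu.
case: (classic (indep_mod (add_line S h) u)) => [H|].
  exists (fun i => u (lift ord0 i)).
  by apply: indep_mod_sel => //; [apply: add_line_ext | apply: lift_inj].
(* Otherwise some relation a0 . f_u + l0 h lies in S with a0_{i0} != 0;
   it expresses h modulo S, and the family without u_{i0} works. *)
move=> /not_all_ex_not [a0 Ha0].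
have [[l0 Hl0] Hn] := imply_to_and _ _ Ha0.
have [i0 /eqP Hi0] := not_all_ex_not _ _ Hn.
exists (fun i => u (lift i0 i)) => g [lam Hlam].
set G := fun j : 'I_n.+1 => \sum_i g i * (j == lift i0 i)%:R.
have HG w : \sum_i g i * fv f (u (lift i0 i)) w = \sum_j G j * fv f (u j) w.
  by apply: comb_sum => i; apply: lin_comb_sel.
have HGl i : G (lift i0 i) = g i.
  rewrite /G (eq_bigr (fun j => (j == i)%:R * g j)) ?sum_delta //.
  by move=> j _; rewrite (inj_eq lift_inj) eq_sym mulrC.
have HG0 : G i0 = 0.
  by rewrite /G big1 // => j _; rewrite (negbTE (neq_lift _ _)) mulr0.
have l0n : l0 != 0.
  apply/eqP => l00; move/eqP: Hi0; apply; apply: Hu.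
  by apply: (HS _ _ _ Hl0) => w; rewrite l00 mul0r addr0.
set mu := - (lam / l0).
have Hcomb : S (fun w => \sum_j (G j + mu * a0 j) * fv f (u j) w).
  apply: (HS _ _ _ (HA _ _ mu Hlam Hl0)) => w; rewrite HG.
  have E : lam * h w + mu * (l0 * h w) = 0.
    by rewrite /mu mulrA mulNr divfK // mulNr addrN.
  rewrite mulrDr addrACA E addr0 mulr_sumr -big_split /=.
  by apply: eq_bigr => j _; rewrite mulrA -mulrDl.
have Hall := Hu _ Hcomb.
have mu0 : mu = 0.
  move: (Hall i0); rewrite HG0 add0r => /eqP; rewrite mulf_eq0 (negbTE Hi0) orbF.
  by move/eqP.
by move=> i; rewrite -HGl; move: (Hall (lift i0 i)); rewrite mu0 mul0r addr0.
Qed.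

Definition consf n (z : vect) (t : 'I_n -> vect) : 'I_n.+1 -> vect :=
  fun i => if unlift ord0 i is Some j then t j else z.

Lemma consf_sum n z (t : 'I_n -> vect) (g : 'I_n.+1 -> k) w :
  \sum_i g i * fv f (consf z t i) w =
  g ord0 * fv f z w + \sum_j g (lift ord0 j) * fv f (t j) w.
Proof.
rewrite big_ord_recl /consf unlift_none; congr (_ + _).
by apply: eq_bigr => j _; rewrite liftK.
Qed.

Lemma indep_mod_consf S n z (t : 'I_n -> vect) : ext_closed S ->
  indep_mod (add_line S (fv f z)) t -> nonzero_mod S (fv f z) ->
  indep_mod S (consf z t).
Proof.
move=> HS Ht Hz g Hg.
have Hl j : g (lift ord0 j) = 0.
  move: j; apply: Ht; exists (g ord0); apply: (HS _ _ _ Hg) => w.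
  by rewrite consf_sum addrC.
have H0 : g ord0 = 0.
  apply: Hz; apply: (HS _ _ _ Hg) => w; rewrite consf_sum big1 ?addr0 //.
  by move=> j _; rewrite Hl mul0r.
by move=> i; case: (unliftP ord0 i) => [j ->|->].
Qed.

Lemma indep_mod_consf_inv S n z (t : 'I_n -> vect) : ext_closed S ->
  indep_mod S (consf z t) ->
  indep_mod (add_line S (fv f z)) t /\ nonzero_mod S (fv f z).
Proof.
move=> HS H; split.
  move=> g [lam Hl] j.
  pose G (i : 'I_n.+1) := if unlift ord0 i is Some j then g j else lam.
  have := H G _ (lift ord0 j); rewrite /G liftK; apply.
  apply: (HS _ _ _ Hl) => w; rewrite consf_sum /G unlift_none addrC; congr (_ + _).
  by apply: eq_bigr => i _; rewrite liftK.
move=> c Hc.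
pose G (i : 'I_n.+1) := if unlift ord0 i is Some j then 0 else c.
have := H G _ ord0; rewrite /G unlift_none; apply.
apply: (HS _ _ _ Hc) => w; rewrite consf_sum /G unlift_none big1 ?addr0 //.
by move=> i _; rewrite liftK mul0r.
Qed.

Definition pair_coef m (a b : k) : 'I_m.+2 -> k :=
  fun i => if unlift ord0 i is Some j then
    (if unlift ord0 j is Some _ then 0 else b) else a.

Lemma sum_pair m a b (F : 'I_m.+2 -> k) :
  \sum_i @pair_coef m a b i * F i = a * F ord0 + b * F (lift ord0 ord0).
Proof.
rewrite big_ord_recl big_ord_recl /pair_coef unlift_none liftK unlift_none.
by rewrite big1 ?addr0 // => i _; rewrite !liftK mul0r.
Qed.

Definition tail2 m (u : 'I_m.+2 -> vect) : 'I_m -> vect :=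
  fun i => u (lift ord0 (lift ord0 i)).

Definition replace2_coef m (a b : k) (i : 'I_m.+1) : 'I_m.+2 -> k :=
  if unlift ord0 i is Some i' then (fun j => (j == lift ord0 (lift ord0 i'))%:R)
  else @pair_coef m a b.

Lemma replace2_comb m a b (u : 'I_m.+2 -> vect) i :
  lin_comb (consf (vcomb (@pair_coef m a b) u) (tail2 u) i) (replace2_coef a b i) u.
Proof.
rewrite /consf /replace2_coef.
by case: (unliftP ord0 i) => [i'|] _; [apply: lin_comb_sel | apply: vcombP].
Qed.

Lemma replace2_indep S m a b (u : 'I_m.+2 -> vect) :
  ext_closed S -> (a != 0) || (b != 0) -> indep_mod S u ->
  indep_mod S (consf (vcomb (@pair_coef m a b) u) (tail2 u)).
Proof.
move=> HS Hab; apply: indep_mod_comb (replace2_comb a b u) _ => // g Hg.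
have Hs j : \sum_i g i * replace2_coef a b i j =
    g ord0 * @pair_coef m a b j +
    \sum_i' g (lift ord0 i') * (j == lift ord0 (lift ord0 i'))%:R.
  rewrite big_ord_recl /replace2_coef unlift_none; congr (_ + _).
  by apply: eq_bigr => i _; rewrite liftK.
have Hl i' : g (lift ord0 i') = 0.
  move: (Hg (lift ord0 (lift ord0 i'))); rewrite Hs /pair_coef !liftK mulr0 add0r.
  rewrite (eq_bigr (fun j => (j == i')%:R * g (lift ord0 j))) ?sum_delta //.
  by move=> j _; rewrite !(inj_eq lift_inj) eq_sym mulrC.
have Hrest j : \sum_i' g (lift ord0 i') * (j == lift ord0 (lift ord0 i'))%:R = 0.
  by apply: big1 => i _; rewrite Hl mul0r.
have H0 : g ord0 = 0.
  move: (Hg ord0) (Hg (lift ord0 ord0)); rewrite !Hs !Hrest !addr0.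
  rewrite /pair_coef unlift_none liftK unlift_none.
  move=> /eqP; rewrite mulf_eq0 => /orP [/eqP //|Ha].
  move=> /eqP; rewrite mulf_eq0 => /orP [/eqP //|Hb].
  by move: Hab; rewrite (eqP Ha) (eqP Hb) eqxx.
by move=> i; case: (unliftP ord0 i) => [i'|] ->.
Qed.

End IndependenceModulo.

(* Membership in a list, for element types without decidable equality. *)
Fixpoint In_seq (A : Type) (x : A) (s : seq A) : Prop :=
  if s is y :: s' then y = x \/ In_seq x s' else False.

Lemma In_seq_map (A B : Type) (g : A -> B) x s : In_seq x s -> In_seq (g x) (map g s).
Proof. by elim: s => //= y s IH [->|H]; [left | right; apply: IH]. Qed.

Lemma In_seq_catl (A : Type) (x : A) s1 s2 : In_seq x s1 -> In_seq x (s1 ++ s2).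
Proof. by elim: s1 => //= y s IH [->|H]; [left | right; apply: IH]. Qed.

Lemma In_seq_catr (A : Type) (x : A) s1 s2 : In_seq x s2 -> In_seq x (s1 ++ s2).
Proof. by elim: s1 => //= y s IH H; right; apply: IH. Qed.

Lemma In_seq_mem (T : eqType) (x : T) s : x \in s -> In_seq x s.
Proof.
elim: s => //= y s IH; rewrite inE => /orP [/eqP ->|H]; by [left | right; apply: IH].
Qed.

Section Constraints.
Variables (k : fieldType) (I : eqType) (f : fser I k).
Local Notation vect := (vect I k).
Local Notation fser := (fser I k).
Hypothesis Hf : psym f.

Definition satisfies (L1 : seq (vect * vect)) (L2 : seq vect) n (u : 'I_n -> vect) :=
  (forall a b, In_seq (a, b) L1 -> forall i, tri f a b (u i) = 0) /\
  (forall e, In_seq e L2 -> forall i j, tri f e (u i) (u j) = 0).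

Definition constrained_family S L1 L2 n :=
  exists u : 'I_n -> vect, indep_mod f S u /\ satisfies L1 L2 u.

Lemma tri_comb_zero n v a (u : 'I_n -> vect) x y :
  lin_comb v a u -> (forall j, tri f x y (u j) = 0) -> tri f x y v = 0.
Proof. by move=> Hv H; rewrite (tri_comb3 _ _ Hf Hv) big1 // => j _; rewrite H mulr0. Qed.

Lemma tri_comb_zero2 n v a w b (u : 'I_n -> vect) e :
  lin_comb v a u -> lin_comb w b u -> (forall i j, tri f e (u i) (u j) = 0) ->
  tri f e v w = 0.
Proof.
move=> Hv Hw H; rewrite (tri_comb2 _ _ Hf Hv) big1 // => i _.
by rewrite (tri_comb_zero Hw) ?mulr0.
Qed.

Lemma satisfies_comb L1 L2 n m (u : 'I_n -> vect) (u' : 'I_m -> vect) M :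
  (forall i, lin_comb (u' i) (M i) u) -> satisfies L1 L2 u -> satisfies L1 L2 u'.
Proof.
move=> HM [H1 H2]; split.
  by move=> a b Hab i; apply: (tri_comb_zero (HM i)) => j; apply: H1.
by move=> e He i j; apply: (tri_comb_zero2 (HM i) (HM j)) => i' j'; apply: H2.
Qed.

Lemma satisfies_consf L1 L2 n z (t : 'I_n -> vect) :
  satisfies L1 L2 (consf z t) <->
  [/\ satisfies L1 L2 t, forall a b, In_seq (a, b) L1 -> tri f a b z = 0,
      forall e, In_seq e L2 -> tri f e z z = 0 &
      forall e, In_seq e L2 -> forall j, tri f e z (t j) = 0].
Proof.
have Ez : consf z t ord0 = z by rewrite /consf unlift_none.
have Et j : consf z t (lift ord0 j) = t j by rewrite /consf liftK.
split=> [[H1 H2]|[[H1 H2] Hz1 Hz2 Hzt]].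
  split; first split.
  - by move=> a b Hab i; rewrite -Et; apply: H1.
  - by move=> e He i j; rewrite -!Et; apply: H2.
  - by move=> a b Hab; rewrite -Ez; apply: H1.
  - by move=> e He; rewrite -Ez; apply: H2.
  - by move=> e He j; rewrite -Ez -Et; apply: H2.
split.
  move=> a b Hab i; case: (unliftP ord0 i) => [j|] ->; rewrite ?Et ?Ez; by auto.
move=> e He i j.
case: (unliftP ord0 i) => [i'|] ->; case: (unliftP ord0 j) => [j'|] ->;
  rewrite ?Et ?Ez; [exact: H2 | rewrite tri_sym23 // | |]; by auto.
Qed.

Lemma constrained_family_shrink S L1 L2 m n : (m <= n)%N -> ext_closed S ->
  constrained_family S L1 L2 n -> constrained_family S L1 L2 m.
Proof.
move=> Hmn HS [u [Hu [H1 H2]]].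
exists (fun i => u (widen_ord Hmn i)); split.
  by apply: indep_mod_sel => // i j /(congr1 val) /= E; apply: val_inj.
by split => [a b Hab i|e He i j]; [apply: H1 | apply: H2].
Qed.

(* One linear constraint costs at most one dimension: kill the functional
   <a, b, -> on the span by subtracting multiples of a pivot vector. *)
Lemma impose_linear S L1 L2 n a' b' : ext_closed S ->
  constrained_family S L1 L2 n.+1 -> constrained_family S ((a', b') :: L1) L2 n.
Proof.
move=> HS [u [Hu HC]].
set phi := fun x => tri f a' b' x.
have [i0 Hi0] : exists i0, phi (u i0) = 0 -> forall i, phi (u i) = 0.
  case: (classic (forall i, phi (u i) = 0)) => [H|/not_all_ex_not [i0 Hi]].
    by exists ord0.
  by exists i0.
set lam := fun i => phi (u (lift i0 i)) / phi (u i0).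
set M := fun i j => (j == lift i0 i)%:R - lam i * (j == i0)%:R.
exists (fun i => vcomb (M i) u); split.
  apply: (indep_mod_comb (M := M)) => // g Hg i; move: (Hg (lift i0 i)).
  rewrite (eq_bigr (fun j => (j == i)%:R * g j)) ?sum_delta //.
  move=> j _; rewrite /M (inj_eq lift_inj) eq_sym.
  have -> : (lift i0 i == i0) = false by apply/negbTE; rewrite eq_sym neq_lift.
  by rewrite mulr0 subr0 mulrC.
have [H1 H2] := satisfies_comb (fun i => vcombP (M i) u) HC.
split => // a b /= [[<- <-]|Hab] i; last exact: H1.
rewrite (tri_comb3 _ _ Hf (vcombP (M i) u)).
have -> : \sum_j M i j * tri f a' b' (u j) = phi (u (lift i0 i)) - lam i * phi (u i0).
  rewrite /M; under eq_bigr => j _ do rewrite mulrBl -mulrA.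
  by rewrite sumrB sum_delta -mulr_sumr sum_delta.
case: (eqVneq (phi (u i0)) 0) => [E|E]; first by rewrite E (Hi0 E) mulr0 subr0.
by rewrite /lam divfK // subrr.
Qed.

Lemma impose_linears S L2 L L1 N : ext_closed S ->
  constrained_family S L1 L2 (N + size L) -> constrained_family S (L ++ L1) L2 N.
Proof.
move=> HS; elim: L L1 N => [|[a' b'] L IH] L1 N /=; first by rewrite addn0.
by rewrite addnS -addSn => H; apply: impose_linear => //; apply: IH.
Qed.
End Constraints.

(* Every binary quadratic, resp. cubic, form over k has a nontrivial zero;
   the forms are written through their coefficient tensors. *)
Definition quadratic_zeros (k : fieldType) : Prop :=
  forall p q r s : k, exists a b : k,
  ((a != 0) || (b != 0)) /\ a * (a * p + b * q) + b * (a * r + b * s) = 0.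

Definition cubic_zeros (k : fieldType) : Prop :=
  forall t000 t001 t010 t011 t100 t101 t110 t111 : k, exists a b : k,
  ((a != 0) || (b != 0)) /\
  a * (a * (a * t000 + b * t001) + b * (a * t010 + b * t011)) +
  b * (a * (a * t100 + b * t101) + b * (a * t110 + b * t111)) = 0.

Section QuadraticConstraints.
Variables (k : fieldType) (I : eqType) (f : fser I k).
Local Notation vect := (vect I k).
Local Notation fser := (fser I k).
Hypothesis Hf : psym f.

Hypothesis Hquad : quadratic_zeros k.

Lemma isotropic_in_family e S L1 L2 m :
  ext_closed S -> constrained_family f S L1 L2 m.+2 ->
  exists z (t : 'I_m -> vect),
    [/\ tri f e z z = 0, indep_mod f S (consf z t) & satisfies f L1 L2 (consf z t)].
Proof.
move=> HS [u [Hu Hsat]].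
set u1 := u (lift ord0 ord0).
have [a [b [Hab Hq]]] := Hquad (tri f e (u ord0) (u ord0))
  (tri f e (u ord0) u1) (tri f e u1 (u ord0)) (tri f e u1 u1).
exists (vcomb (@pair_coef _ m a b) u), (tail2 u); split.
- rewrite (tri_comb2 _ _ Hf (vcombP _ u)) sum_pair.
  by rewrite !(tri_comb3 _ _ Hf (vcombP _ u)) !sum_pair.
- exact: replace2_indep.
- exact: satisfies_comb (replace2_comb a b u) Hsat.
Qed.

(* One quadratic constraint costs a bounded factor: pick an isotropic z,
   pass to S + k f_z, impose the linear constraints <x, z, -> = 0 and
   recurse on the remaining family. *)
Lemma impose_quadratic e N : forall S L1 L2 K, ext_closed S ->
  (N * (size L2 + 4) <= K)%N -> constrained_family f S L1 L2 K ->
  constrained_family f S L1 (e :: L2) N.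
Proof.
elim: N => [|N IH] S L1 L2 K HS HK HF.
  by exists (fun _ => vect0 I k); split; [move=> ? ? [] | split=> [? ? ? []|? ? []]].
set m := (N * (size L2 + 4) + (size L2).+1)%N.
have Hm : (m.+2 <= K)%N by move: HK; rewrite /m mulSn; lia.
have [z [t0 [Hzz Ht0 /(satisfies_consf Hf) [Hsat0 HzL1 HzL2 _]]]] :=
  isotropic_in_family e HS (constrained_family_shrink Hm HS HF).
have [Ht0' Hz] := indep_mod_consf_inv HS Ht0.
have HS' : ext_closed (add_line S (fv f z)) := add_line_ext HS.
set Lz := [seq (x, z) | x <- e :: L2].
have HF' : constrained_family f (add_line S (fv f z)) L1 L2
    (N * (size L2 + 4) + size Lz).
  by rewrite size_map; exists t0.
have [t [Ht [Ht1 Ht2]]] := IH _ _ _ _ HS' (leqnn _) (impose_linears Hf HS' HF').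
exists (consf z t); split; first exact: indep_mod_consf.
apply/(satisfies_consf Hf); split.
- by split=> [a b Hab|]; [apply: Ht1; apply: In_seq_catr | exact: Ht2].
- exact: HzL1.
- by move=> e' [<-|He]; [exact: Hzz | exact: HzL2].
- move=> e' He j; apply: Ht1; apply: In_seq_catl.
  exact: (In_seq_map (fun x => (x, z)) He).
Qed.

Hypothesis Hcubic : cubic_zeros k.

Lemma cubic_zero_vector S L1 L2 : ext_closed S -> constrained_family f S L1 L2 2 ->
  exists v, [/\ nonzero_mod S (fv f v),
    forall a b, In_seq (a, b) L1 -> tri f a b v = 0,
    forall e, In_seq e L2 -> tri f e v v = 0 & tri f v v v = 0].
Proof.
move=> HS [u [Hu Hsat]].
set u0 := u ord0; set u1 := u (lift ord0 ord0).
have [a [b [Hab Hq]]] := Hcubic (tri f u0 u0 u0) (tri f u0 u0 u1)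
  (tri f u0 u1 u0) (tri f u0 u1 u1) (tri f u1 u0 u0) (tri f u1 u0 u1)
  (tri f u1 u1 u0) (tri f u1 u1 u1).
set v := vcomb (@pair_coef _ 0 a b) u.
have [_ Hv] := indep_mod_consf_inv HS (replace2_indep HS Hab Hu).
have [_ HvL1 HvL2 _] := iffLR (satisfies_consf Hf _ _ _ _)
  (satisfies_comb Hf (replace2_comb a b u) Hsat).
exists v; split => //.
rewrite (tri_comb1 _ _ _ (vcombP _ u)) sum_pair.
rewrite !(tri_comb2 _ _ Hf (vcombP _ u)) !sum_pair.
by rewrite !(tri_comb3 _ _ Hf (vcombP _ u)) !sum_pair.
Qed.

Fixpoint add_lines (H : nat -> fser) (n : nat) : fser -> Prop :=
  if n is n'.+1 then add_line (add_lines H n') (H n') else @fin_strength I k.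

Lemma add_lines_ext H n : ext_closed (add_lines H n).
Proof.
elim: n => [|n IH] /=; last exact: add_line_ext.
by move=> g g' E Hg; apply: fin_strength_ext Hg E.
Qed.

Lemma add_lines_add H n : add_closed (add_lines H n).
Proof.
elim: n => [|n IH] /=; last by apply: add_line_add => //; apply: add_lines_ext.
by move=> g g' mu; apply: fin_strength_add.
Qed.

Lemma add_lines_intro (H : nat -> fser) (n : nat) (g : fser) (c : nat -> k) :
  fin_strength (fun w => g w + \sum_(j < n) c j * H j w) -> add_lines H n g.
Proof.
elim: n g => [|n IH] g Hg /=.
  by apply: fin_strength_ext Hg _ => w; rewrite big_ord0 addr0.
exists (c n); apply: IH; apply: fin_strength_ext Hg _ => w.
by rewrite big_ord_recr /= addrAC addrA.
Qed.

Lemma exists_constrained_vector (H : nat -> fser) n L1 L2 :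
  rrk_infinite f ->
  exists v, [/\ nonzero_mod (add_lines H n) (fv f v),
    forall a b, In_seq (a, b) L1 -> tri f a b v = 0,
    forall e, In_seq e L2 -> tri f e v v = 0 & tri f v v v = 0].
Proof.
move=> Hrrk.
have HS := @add_lines_ext H n.
have Hindep N : exists u : 'I_N -> vect, indep_mod f (add_lines H n) u.
  elim: n N {HS} => [|j IH] N; first exact: Hrrk.
  have [u Hu] := IH N.+1.
  exact: indep_mod_add_line (@add_lines_ext H j) (@add_lines_add H j) Hu.
have Hlin N : constrained_family f (add_lines H n) L1 [::] N.
  rewrite -(cats0 L1); apply: impose_linears => //.
  by have [u Hu] := Hindep (N + size L1)%N; exists u; split => //; split.
have Hfam N : constrained_family f (add_lines H n) L1 L2 N.
  elim: L2 N => [|e L2' IH] N; first exact: Hlin.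
  exact: impose_quadratic (IH _).
exact: cubic_zero_vector HS (Hfam 2%N).
Qed.

End QuadraticConstraints.

(* Over an algebraically closed field, binary quadratic and cubic forms
   have nontrivial zeros: dehomogenize and take a root of the resulting
   monic polynomial (or (1, 0) if the leading coefficient vanishes). *)
Lemma closed_quadratic_zeros (k : closedFieldType) : quadratic_zeros k.
Proof.
move=> p q r s.
case: (eqVneq p 0) => [->|pn]; first by exists 1, 0; rewrite oner_neq0; split => //; ring.
have [x Hx] := @solve_monicpoly _ 2
  (fun i => if i == 0%N then - s / p else - (q + r) / p) isT.
exists x, 1; split; first by rewrite oner_neq0 orbT.
move: Hx; rewrite !big_ord_recr big_ord0 /= add0r expr0 expr1 mulr1 => Hx.
have <- : p * (x ^+ 2 - (- s / p + - (q + r) / p * x)) = 0 by rewrite Hx subrr mulr0.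
by field.
Qed.

Lemma closed_cubic_zeros (k : closedFieldType) : cubic_zeros k.
Proof.
move=> t000 t001 t010 t011 t100 t101 t110 t111.
case: (eqVneq t000 0) => [->|pn].
  by exists 1, 0; rewrite oner_neq0; split => //; ring.
set c2 := t001 + t010 + t100; set c1 := t011 + t101 + t110.
have [x Hx] := @solve_monicpoly _ 3 (fun i => if i == 0%N then - t111 / t000
  else if i == 1%N then - c1 / t000 else - c2 / t000) isT.
exists x, 1; split; first by rewrite oner_neq0 orbT.
move: Hx; rewrite !big_ord_recr big_ord0 /= add0r expr0 expr1 mulr1 => Hx.
have <- : t000 * (x ^+ 3 - (- t111 / t000 + - c1 / t000 * x + - c2 / t000 * x ^+ 2)) = 0.
  by rewrite Hx subrr mulr0.
by rewrite /c1 /c2; field.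
Qed.

Section AppendRow.
Variables (k : fieldType) (I : eqType).
Local Notation vect := (vect I k).
Local Notation table := (table I k).

Lemma positions_rcons (T : table) (v : vect) :
  positions (rcons T (v, [::])) = positions T ++ [:: (size T, None)].
Proof.
rewrite /positions size_rcons -addn1 iotaD map_cat flatten_cat /=.
congr (_ ++ _); last by rewrite add0n nth_rcons ltnn eqxx.
congr flatten; apply/eq_in_map => i; rewrite mem_iota => /andP [_ Hi].
by rewrite nth_rcons Hi.
Qed.

Lemma mem_positions (T : table) p : p \in positions T -> (p.1 < size T)%N.
Proof.
move/flatten_mapP => [i]; rewrite mem_iota add0n => /andP [_ Hi].
by rewrite inE => /orP [/eqP -> //| /mapP [j _ ->]].
Qed.

Lemma entry_rcons_some (T : table) (v : vect) i j :
  entry (rcons T (v, [::])) (i, Some j) = entry T (i, Some j).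
Proof.
rewrite /entry nth_rcons /=; case: ltnP => // Hi.
by rewrite (nth_default _ Hi) /=; case: eqP.
Qed.

Lemma entry_rcons (T : table) x p : (p.1 < size T)%N -> entry (rcons T x) p = entry T p.
Proof. by move=> H; rewrite /entry nth_rcons H. Qed.

Lemma entry_rcons_cases (T : table) (v : vect) p :
  p \in positions (rcons T (v, [::])) ->
  (p \in positions T /\ entry (rcons T (v, [::])) p = entry T p) \/
  (p = (size T, None) /\ entry (rcons T (v, [::])) p = v).
Proof.
rewrite positions_rcons mem_cat inE => /orP [Hp|/eqP ->].
  by left; split => //; rewrite entry_rcons // mem_positions.
by right; split => //; rewrite /entry nth_rcons ltnn eqxx.
Qed.

Lemma sum_positions_rcons (T : table) (v : vect) (F : nat * option nat -> vect -> k) :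
  \sum_(p <- positions (rcons T (v, [::]))) F p (entry (rcons T (v, [::])) p) =
  \sum_(p <- positions T) F p (entry T p) + F (size T, None) v.
Proof.
rewrite positions_rcons big_cat big_seq1; congr (_ + _).
  by apply: eq_big_seq => p Hp; rewrite entry_rcons // mem_positions.
by rewrite /entry nth_rcons ltnn eqxx.
Qed.

Lemma selected_rcons f (T : table) (v : vect) p :
  c_selected f (rcons T (v, [::])) p <-> c_selected f T p.
Proof.
by case: p => i [j|]; rewrite /c_selected /= ?entry_rcons_some //; split; left.
Qed.
End AppendRow.

Section FreshVector.
Variables (k : fieldType) (I : eqType) (f : fser I k) (T : table I k).
Local Notation vect := (vect I k).
Local Notation fser := (fser I k).
Local Notation pos := (positions T).
Local Notation ent := (entry T).
Hypothesis Hf : psym f.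

Definition table_quadric (j : nat) : fser := fv f (ent (nth (0%N, None) pos j)).
Definition table_span : fser -> Prop := add_lines table_quadric (size pos).

Lemma table_span_intro (g : fser) (c : nat * option nat -> k) :
  fin_strength (fun w => g w + \sum_(p <- pos) c p * fv f (ent p) w) -> table_span g.
Proof.
move=> Hg; apply: (add_lines_intro (c := fun j => c (nth (0%N, None) pos j))).
by apply: fin_strength_ext Hg _ => w; rewrite (big_nth (0%N, None)) big_mkord.
Qed.

Lemma table_span_single (g : fser) p mu : p \in pos ->
  fin_strength (fun w => g w + mu * fv f (ent p) w) -> table_span g.
Proof.
move=> Hp Hg; have Hi : (index p pos < size pos)%N by rewrite index_mem.
apply: (add_lines_intro (c := fun j => if j == index p pos then mu else 0)).
apply: fin_strength_ext Hg _ => w; congr (_ + _).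
rewrite (bigD1 (Ordinal Hi)) //= eqxx big1 ?addr0.
  by rewrite /table_quadric nth_index.
move=> j Hj; case: eqP => [E|_]; last by rewrite mul0r.
by move: Hj; rewrite -val_eqE /= E eqxx.
Qed.

Definition fresh (v : vect) : Prop :=
  [/\ nonzero_mod table_span (fv f v),
      forall p q, p \in pos -> q \in pos -> tri f (ent p) (ent q) v = 0,
      forall p, p \in pos -> tri f (ent p) v v = 0 & tri f v v v = 0].

Lemma exists_fresh :
  quadratic_zeros k -> cubic_zeros k -> rrk_infinite f -> exists v, fresh v.
Proof.
move=> Hq Hc Hrrk.
set L1 := [seq (ent pq.1, ent pq.2) | pq <- [seq (p, q) | p <- pos, q <- pos]].
have [v [Hv H1 H2 H3]] := exists_constrained_vector Hf Hq Hc table_quadric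
  (size pos) L1 [seq ent p | p <- pos] Hrrk.
exists v; split => // [p q Hp Hq'|p Hp]; last by apply: H2; apply/In_seq_map/In_seq_mem.
apply: H1; apply: (In_seq_map (fun pq => (ent pq.1, ent pq.2)) (x := (p, q))).
by apply: In_seq_mem; apply/allpairsP; exists (p, q).
Qed.

Variable v : vect.
Hypothesis Hv : fresh v.
Local Notation T' := (rcons T (v, [::])).

Lemma tri_nonzero_old p1 p2 p3 :
  p1 \in positions T' -> p2 \in positions T' -> p3 \in positions T' ->
  tri f (entry T' p1) (entry T' p2) (entry T' p3) != 0 ->
  [/\ p1 \in pos, p2 \in pos & p3 \in pos] /\
  tri f (ent p1) (ent p2) (ent p3) != 0.
Proof.
case: Hv => _ Hold2 Hold1 Hvvv.
move=> /entry_rcons_cases [[O1 ->]|[_ ->]] /entry_rcons_cases [[O2 ->]|[_ ->]]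
       /entry_rcons_cases [[O3 ->]|[_ ->]].
- by split.
- by rewrite Hold2 ?eqxx.
- by rewrite tri_sym23 // Hold2 ?eqxx.
- by rewrite Hold1 ?eqxx.
- by rewrite tri_sym12 // tri_sym23 // Hold2 ?eqxx.
- by rewrite tri_sym12 // Hold1 ?eqxx.
- by rewrite tri_sym23 // tri_sym12 // Hold1 ?eqxx.
- by rewrite Hvvv eqxx.
Qed.

(* (a): a linear relation involving v would put f_v in table_span. *)
Lemma good_a_rcons : good_a T -> good_a T'.
Proof.
move=> Ga c Hc.
have Hc' l : \sum_(p <- pos) c p * vcoef (ent p) l + c (size T, None) * vcoef v l = 0.
  rewrite -[RHS](Hc l); symmetry.
  exact: (sum_positions_rcons T v (fun p x => c p * vcoef x l)).
have cn : c (size T, None) = 0.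
  case: (eqVneq (c (size T, None)) 0) => // cn; exfalso.
  have Hvl l : vcoef v l = \sum_(p <- pos) (- c p / c (size T, None)) * vcoef (ent p) l.
    move/eqP: (Hc' l); rewrite addrC addr_eq0 => /eqP E.
    rewrite -[vcoef v l](mulKf cn) E -sumrN mulr_sumr.
    by apply: eq_bigr => p _; field.
  suff : (1 : k) = 0 by move/eqP; rewrite oner_eq0.
  case: Hv => Hnz _ _ _; apply: Hnz.
  apply: (table_span_intro (c := fun p => c p / c (size T, None))).
  apply: fin_strength_ext (fin_strength0 _ _) _ => w.
  rewrite mul1r /fv (fder_linear _ _ Hvl) -big_split /= big1 // => p _.
  by field.
move=> p; rewrite positions_rcons mem_cat inE => /orP [Hp|/eqP -> //].
by apply: (Ga c _ p Hp) => l; move: (Hc' l); rewrite cn mul0r addr0.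
Qed.

(* (b): the only nonzero values of tri are those of the old table. *)
Lemma good_b_rcons : good_b f T -> good_b f T'.
Proof.
move=> [Gb1 Gb2]; split.
  move=> i j /entry_rcons_cases [[Hp _]|[//]].
  rewrite entry_rcons_some entry_rcons; last exact: (mem_positions Hp).
  exact: Gb1.
move=> p1 p2 p3 H1 H2 H3 /(tri_nonzero_old H1 H2 H3) [[O1 O2 O3] Hne].
have [i [j [Hij Hperm]]] := Gb2 _ _ _ O1 O2 O3 Hne.
by exists i, j; rewrite positions_rcons mem_cat Hij.
Qed.

(* (c): f_v is independent of all old selected quadrics modulo P_2^o. *)
Lemma good_c_rcons : good_c f T -> good_c f T'.
Proof.
case: Hv => Hnz _ _ _ [Gc1 Gc2]; split.
  move=> p p' /entry_rcons_cases [[Op Ep]|[Np Ep]] /entry_rcons_cases [[Op' Ep']|[Np' Ep']]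
    /selected_rcons Sp /selected_rcons Sp' Hne Hfin.
  - apply: (Gc1 p p' Op Op' Sp Sp' Hne).
    by apply: fin_strength_ext Hfin _ => w; rewrite Ep Ep'.
  - suff : (-1 : k) = 0 by move/eqP; rewrite oppr_eq0 oner_eq0.
    apply: Hnz; apply: (table_span_single (mu := 1) Op).
    by apply: fin_strength_ext Hfin _ => w; rewrite Ep Ep'; ring.
  - suff : (1 : k) = 0 by move/eqP; rewrite oner_eq0.
    apply: Hnz; apply: (table_span_single (mu := -1) Op').
    by apply: fin_strength_ext Hfin _ => w; rewrite Ep Ep'; ring.
  - by move: Hne; rewrite Np Np' eqxx.
move=> c Hsel Hfin.
have Hfin' : fin_strength (fun w => \sum_(p <- pos) c p * fv f (ent p) w +
    c (size T, None) * fv f v w).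
  apply: fin_strength_ext Hfin _ => w.
  exact: (sum_positions_rcons T v (fun p x => c p * fv f x w)).
have cn : c (size T, None) = 0.
  apply: Hnz; apply: table_span_intro.
  by apply: fin_strength_ext Hfin' _ => w; rewrite addrC.
have Hold : forall p, p \in pos -> c p = 0.
  apply: Gc2; first by move=> p Hn; apply: Hsel => /selected_rcons.
  by apply: fin_strength_ext Hfin' _ => w; rewrite cn mul0r addr0.
by move=> p; rewrite positions_rcons mem_cat inE => /orP [/Hold|/eqP ->].
Qed.

Lemma good_table_rcons : good_table f T -> good_table f T'.
Proof.
move=> [Ga [Gb Gc]].
by split; [|split]; [apply: good_a_rcons | apply: good_b_rcons | apply: good_c_rcons].
Qed.

End FreshVector.

Theorem lemma4p5 (k : closedFieldType) (I : eqType) (f : fser I k)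
    (T : table I k) :
  (2%:R != 0 :> k) -> (3%:R != 0 :> k) ->
  homog 3 f ->
  rrk_infinite f ->
  good_table f T ->
  exists v : vect I k, good_table f (rcons T (v, [::])).
Proof.
move=> _ _ [_ Hf] Hrrk HT.
have [v Hv] := exists_fresh T Hf (@closed_quadratic_zeros k) (@closed_cubic_zeros k) Hrrk.
by exists v; apply: good_table_rcons.
Qed.
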